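(* Let $n\ge 1$ and let $G_1,\ldots,G_n$ be finite simple graphs with pairwise disjoint vertex sets. For each $1\le i\le n$ let $A_i\subseteq V(G_i)$ be a subset such that (a) $t_i:=\alpha(G_i)-\alpha(G_i\setminus A_i)$ is an odd integer with $t_i\ge 1$; (b) $\deg(G_i)-\deg(G_i\setminus A_i)=t_i-1$; (c) the leading coefficients of the $2n$ polynomials $h_{G_1}(t),\ldots,h_{G_n}(t),h_{G_1\setminus A_1}(t),\ldots,h_{G_n\setminus A_n}(t)$ are either all positive or all negative. Let $H_n$ be the graph with vertex set $V(H_n)=V(G_1)\cup\cdots\cup V(G_n)\cup\{y_1,\ldots,y_n\}$ (the $y_i$ new vertices) and edge set $E(H_n)=E(G_1)\cup\cdots\cup E(G_n)\cup\{\{y_i,x\}\mid x\in A_i,\ 1\le i\le n\}\cup\{\{y_i,y_j\}\mid i\ne j\}$. Let $R=\mathbb{K}[V(H_n)]$. Then $$\dim(R/I(H_n))=\sum_{i=1}^n\alpha(G_i)\quad\text{and}\quad \deg\big(h_{R/I(H_n)}(t)\big)=1+\sum_{i=1}^n\deg(G_i).$$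
   Context: All graphs are finite and simple. For a graph $G$ with vertex set $V(G)$, let $\mathbb{K}[V(G)]$ be the polynomial ring over a field $\mathbb{K}$ whose variables are the vertices, and let the edge ideal be $I(G)=(x_ix_j\mid \{x_i,x_j\}\in E(G))$ (so $I(G)=0$ if $G$ has no edges). For a homogeneous ideal $I$ of $S=\mathbb{K}[V(G)]$ (standard grading), the Hilbert series $\sum_{i\ge0}\dim_{\mathbb{K}}(S/I)_it^i$ can be written uniquely as $h_{S/I}(t)/(1-t)^{\dim(S/I)}$ with $h_{S/I}(t)\in\mathbb{Z}[t]$ and $h_{S/I}(1)\neq 0$; $h_{S/I}(t)$ is the $h$-polynomial. Write $h_G(t):=h_{\mathbb{K}[V(G)]/I(G)}(t)$ and $\deg(G):=\deg h_G(t)$. An independent set is a set of vertices with no edges among them; $\alpha(G)$ is the maximum size of an independent set (so $\dim \mathbb{K}[V(G)]/I(G)=\alpha(G)$). For $A\subseteq V(G)$, $G\setminus A$ denotes the induced subgraph on $V(G)\setminus A$ (with polynomial ring $\mathbb{K}[V(G)\setminus A]$); if $V(G)\setminus A=\emptyset$ then $\alpha(G\setminus A)=0$ and $h_{G\setminus A}(t)=1$. *)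

From mathcomp Require Import all_boot all_order all_algebra.
Set Implicit Arguments. Unset Strict Implicit. Unset Printing Implicit Defensive.
Import Order.TTheory GRing.Theory Num.Theory.

Record graph (T : finType) := Graph { verts : {set T}; adj : rel T }.

Definition simple_graph (T : finType) (G : graph T) : Prop :=
  [/\ symmetric (adj G), irreflexive (adj G) &
      forall x y, adj G x y -> (x \in verts G) && (y \in verts G)].

Definition independent (T : finType) (G : graph T) (F : {set T}) : bool :=
  (F \subset verts G) && [forall x in F, forall y in F, ~~ adj G x y].

Definition alpha (T : finType) (G : graph T) : nat :=
  \max_(F : {set T} | independent G F) #|F|.

Definition delv (T : finType) (G : graph T) (A : {set T}) : graph T :=
  Graph (verts G :\: A)
        (fun x y => [&& adj G x y, x \in verts G :\: A & y \in verts G :\: A]).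

(* Monomials of degree i in K[V(G)] are exponent vectors m : T -> nat supported
   on V(G) with total degree i (each exponent is then < i.+1).
   A monomial lies in the monomial ideal I(G) iff it is divisible by some
   generator x_u x_v with {u,v} an edge. *)
Definition monomial_deg (T : finType) (G : graph T) (i : nat)
  (m : {ffun T -> 'I_i.+1}) : bool :=
  (\sum_(x : T) (m x : nat) == i) && [forall x, (x \notin verts G) ==> (m x == ord0)].

Definition in_edge_ideal (T : finType) (G : graph T) (i : nat)
  (m : {ffun T -> 'I_i.+1}) : bool :=
  [exists x, exists y, [&& adj G x y, x \in verts G, y \in verts G,
                           0 < m x & 0 < m y]].

(* Hilbert function: dim_K (K[V(G)]/I(G))_i = number of standard monomials
   (monomials of degree i not in I(G)), since I(G) is a monomial ideal. *)
Definition hilb_fun (T : finType) (G : graph T) (i : nat) : nat :=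
  #|[set m : {ffun T -> 'I_i.+1} | monomial_deg G m && ~~ in_edge_ideal G m]|.

(* [is_hilb G d h] : the Hilbert series sum_i HF(i) t^i equals h(t)/(1-t)^d
   with h(1) <> 0, i.e. (1-t)^d * HS(t) = h(t) coefficientwise. By uniqueness,
   d = dim K[V(G)]/I(G) and h = h_G. *)
Definition is_hilb (T : finType) (G : graph T) (d : nat) (h : {poly int}) : Prop :=
  (h.[1] != 0)%R /\
  forall i : nat,
    (h`_i = \sum_(k < (minn i d).+1)
              ((-1) ^+ k * ('C(d, k))%:R * (hilb_fun G (i - k)%N)%:R))%R.

Definition pdeg (p : {poly int}) : nat := (size p).-1.

(* The graph H_n on V(G_1) u ... u V(G_n) u {y_1,...,y_n}; the new vertex y_j
   is represented by inr j. *)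
Definition Hn (T : finType) (n : nat) (G : 'I_n -> graph T) (A : 'I_n -> {set T})
  : graph (T + 'I_n)%type :=
  Graph [set v : (T + 'I_n)%type |
           match v with inl x => [exists i, x \in verts (G i)] | inr _ => true end]
        (fun u v => match u, v with
                    | inl x, inl y =>
                        [exists i, [&& adj (G i) x y, x \in verts (G i) & y \in verts (G i)]]
                    | inl x, inr j => x \in A j
                    | inr j, inl x => x \in A j
                    | inr i, inr j => i != j
                    end).

(* A monomial lies outside I(G) iff its support is an independent set, so the
   Hilbert series of K[V(G)]/I(G) is a sum over independent sets F of
   t^|F|/(1-t)^|F|, whence h_G = sum_F t^|F| (1-t)^(alpha(G)-|F|), the unique
   numerator with h(1) <> 0.  An independent set of H_n contains at most one new
   vertex y_j, and if it contains y_j its trace on G_j avoids A_j.  Hence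
   alpha(H_n) = sum_i alpha(G_i) (as t_j >= 1) and
     h_{H_n} = prod_i h_{G_i}
             + sum_j t (1-t)^(t_j-1) h_{G_j \ A_j} prod_(i<>j) h_{G_i}.
   The first term has degree sum_i deg(G_i); by (b) every term of the second
   sum has degree one more, and as t_j is odd, (c) gives all their leading
   coefficients the same sign, so they cannot cancel. *)

From mathcomp Require Import all_boot all_order all_algebra.
From mathcomp Require Import zify.
Set Implicit Arguments. Unset Strict Implicit. Unset Printing Implicit Defensive.
Import Order.TTheory GRing.Theory Num.Theory.

Fixpoint ncompositions (k s : nat) : nat :=
  if k is k'.+1 then (\sum_(v < s) ncompositions k' (s - v.+1))%N else (s == 0)%N.

Section MonomialCount.
Variable T : finType.

Definition msupp i (m : {ffun T -> 'I_i.+1}) : {set T} := [set x | 0 < m x].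

Definition monomials_on i (F : {set T}) s : {set {ffun T -> 'I_i.+1}} :=
  [set m | (msupp m == F) && (\sum_x m x == s)].

Lemma card_monomials_on0 i s : #|monomials_on i set0 s| = (s == 0).
Proof.
have supp0 (m : {ffun T -> 'I_i.+1}) : (msupp m == set0) = (m == [ffun => ord0]).
  apply/eqP/eqP => [m0 | ->]; last by apply/setP => x; rewrite !inE ffunE.
  apply/ffunP => x; apply/val_inj/eqP; rewrite ffunE /= eqn0Ngt.
  by have := in_set0 x; rewrite -m0 inE => ->.
have -> : monomials_on i set0 s = [set m | (m == [ffun => ord0]) && (s == 0)].
  apply/setP => m; rewrite !inE supp0; case: eqP => //= ->.
  by rewrite big1 ?(eq_sym 0) // => x _; rewrite ffunE.
case: (s == 0); last by apply/eqP; rewrite cards_eq0; apply/eqP/setP => m; rewrite !inE andbF.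
rewrite (_ : [set m | _] = [set [ffun => ord0]]) ?cards1 //.
by apply/setP => m; rewrite !inE andbT.
Qed.

Lemma card_monomials_on_fiber i (F : {set T}) s x (v : 'I_i.+1) :
  x \in F -> 0 < v <= s ->
  #|[set m in monomials_on i F s | m x == v]| = #|monomials_on i (F :\ x) (s - v)|.
Proof.
move=> Fx /andP[v_gt0 le_vs].
pose upd (m : {ffun T -> 'I_i.+1}) v' : {ffun T -> 'I_i.+1} :=
  [ffun y => if y == x then v' else m y].
have sum_upd m v' : \sum_y upd m v' y = v' + \sum_(y | y != x) m y.
  rewrite (bigD1 x) //= ffunE eqxx; congr (_ + _).
  by apply: eq_bigr => y /negbTE nyx; rewrite ffunE nyx.
have supp_updv m : msupp (upd m v) = x |: msupp m.
  by apply/setP => y; rewrite !inE ffunE; case: eqP => [->|].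
have supp_upd0 m : msupp (upd m ord0) = msupp m :\ x.
  by apply/setP => y; rewrite !inE ffunE; case: eqP => [->|].
have updK (m : {ffun T -> 'I_i.+1}) : upd m (m x) = m.
  by apply/ffunP => y; rewrite ffunE; case: eqP => [->|].
have upd_upd m v' v'' : upd (upd m v') v'' = upd m v''.
  by apply/ffunP => y; rewrite !ffunE; case: eqP.
have mx0 (m : {ffun T -> 'I_i.+1}) : msupp m = F :\ x -> m x = ord0.
  move=> sm; apply/val_inj/eqP; rewrite /= eqn0Ngt.
  by have := setD11 x F; rewrite -sm inE => ->.
have sumD1 (m : {ffun T -> 'I_i.+1}) : \sum_y m y = m x + \sum_(y | y != x) m y.
  exact: bigD1.
rewrite -[RHS](card_in_imset (f := upd^~ v)); last first.
  move=> m1 m2; rewrite !inE => /andP[/eqP s1 _] /andP[/eqP s2 _] e12.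
  by rewrite -(updK m1) -(updK m2) (mx0 _ s1) (mx0 _ s2) -(upd_upd m1 v) e12 upd_upd.
apply: eq_card => m; rewrite !inE; apply/andP/imsetP.
  case=> /andP[/eqP sm /eqP sum_m] /eqP mx; exists (upd m ord0).
    by rewrite inE supp_upd0 sm eqxx sum_upd add0n -sum_m sumD1 mx addKn /=.
  by rewrite upd_upd -mx updK.
case=> m' /[!inE] /andP[/eqP sm' /eqP sum_m'] ->.
rewrite supp_updv sm' setD1K // eqxx sum_upd ffunE eqxx; split=> //.
by move: sum_m'; rewrite sumD1 (mx0 _ sm') /= add0n => ->; rewrite subnKC.
Qed.

Lemma card_monomials_on i (F : {set T}) s :
  s <= i -> #|monomials_on i F s| = ncompositions #|F| s.
Proof.
move cardF: #|F| => k; elim: k F s cardF => [|k IHk] F s cardF le_si.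
  by rewrite (cards0_eq cardF) card_monomials_on0.
have [x Fx] : exists x, x \in F by apply/set0Pn; rewrite -card_gt0 cardF.
have cardFx : #|F :\ x| = k by move: cardF; rewrite (cardsD1 x F) Fx => -[].
have fiberE (v : 'I_i.+1) : #|[set m in monomials_on i F s | m x == v]| =
    if 0 < v <= s then ncompositions k (s - v) else 0.
  case: ifP => [v_in | v_out].
    by rewrite card_monomials_on_fiber // IHk // (leq_trans (leq_subr _ _) le_si).
  apply/eqP; rewrite cards_eq0; apply/eqP/setP => m; rewrite !inE.
  apply/negbTE; apply: contraFN v_out => /andP[/andP[/eqP sm /eqP sum_m] /eqP <-].
  rewrite -sum_m (bigD1 x) //= leq_addr andbT.
  by have := Fx; rewrite -sm inE.
rewrite -sum1_card (partition_big (fun m : {ffun T -> 'I_i.+1} => m x) xpredT) //=.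
under eq_bigr => v _ do rewrite sum1dep_card fiberE.
rewrite big_ord_recl /= add0n (big_ord_widen i (fun v => ncompositions k (s - v.+1)) le_si).
rewrite [RHS]big_mkcond; apply: eq_bigr => v _.
by rewrite /bump leq0n add1n.
Qed.
Lemma standard_monomialE (G : graph T) i (m : {ffun T -> 'I_i.+1}) :
  monomial_deg G m && ~~ in_edge_ideal G m =
  independent G (msupp m) && (\sum_x m x == i).
Proof.
rewrite /monomial_deg /independent.
have -> : [forall x, (x \notin verts G) ==> (m x == ord0)] = (msupp m \subset verts G).
  apply/forallP/subsetP => [m0 x | sub x].
    rewrite inE => mx; apply: contraLR mx => /(implyP (m0 x)).
    by rewrite -val_eqE /= lt0n negbK.
  by apply/implyP; apply: contraR; rewrite -val_eqE /= -lt0n => mx; apply: sub; rewrite inE.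
case: (boolP (msupp m \subset verts G)) => [/subsetP sub | _]; last by rewrite andbF.
rewrite andbT /= andbC; congr (_ && _).
have -> : in_edge_ideal G m = [exists x in msupp m, exists y in msupp m, adj G x y].
  apply/existsP/existsP => -[x].
    case/existsP=> y /and5P[xy _ _ mx my]; exists x; rewrite inE mx.
    by apply/existsP; exists y; rewrite inE my.
  rewrite inE => /andP[mx /existsP[y]]; rewrite inE => /andP[my xy].
  by exists x; apply/existsP; exists y; rewrite xy mx my !sub ?inE.
by rewrite negb_exists_in; apply: eq_forallb => x; rewrite negb_exists_in.
Qed.

Lemma hilb_funE (G : graph T) i :
  hilb_fun G i = \sum_(F | independent G F) ncompositions #|F| i.
Proof.
rewrite /hilb_fun -sum1dep_card.
under eq_bigl => m do rewrite standard_monomialE.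
rewrite (partition_big (@msupp i) (independent G)) => [|m /andP[] //].
apply: eq_bigr => F indF; rewrite sum1dep_card -(@card_monomials_on i) //.
by apply: eq_card => m; rewrite !inE andbC; case: eqP => //= ->; rewrite indF.
Qed.

End MonomialCount.

(* Power series are compared through their truncations [take_poly N]. *)
Section TruncatedSeries.
Variable R : comNzRingType.
Local Open Scope ring_scope.
Implicit Types p q r : {poly R}.

Lemma take_polyMl_take N r p : take_poly N (r * take_poly N p) = take_poly N (r * p).
Proof.
apply/polyP => i; rewrite !coef_take_poly; case: ifP => // ltiN.
rewrite !coefM; apply: eq_bigr => j _.
by rewrite coef_take_poly (leq_ltn_trans (leq_subr _ _) ltiN).
Qed.

Lemma take_polyMl N r p q :
  take_poly N p = take_poly N q -> take_poly N (r * p) = take_poly N (r * q).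
Proof. by move=> Epq; rewrite -take_polyMl_take Epq take_polyMl_take. Qed.

Lemma coef_1subX_exp d j : ((1 - 'X) ^+ d)`_j = (-1) ^+ j * ('C(d, j))%:R :> R.
Proof.
elim: d j => [|d IHd] j.
  rewrite expr0 coefC; case: j => [|j] /=; first by rewrite mul1r.
  by rewrite bin0n mulr0.
rewrite exprS mulrBl mul1r coefB coefXM IHd.
case: j => [|j]; first by rewrite !bin0 subr0.
by rewrite IHd binS natrD exprS mulrDr mulN1r /= !mulNr.
Qed.

Lemma take_poly_1subX_exp_inj (S : nat -> {poly R}) d d' h h' :
  h.[1] != 0 -> h'.[1] != 0 ->
  (forall N, take_poly N h = take_poly N ((1 - 'X) ^+ d * S N)) ->
  (forall N, take_poly N h' = take_poly N ((1 - 'X) ^+ d' * S N)) ->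
  d = d' /\ h = h'.
Proof.
wlog le_dd' : d d' h h' / (d <= d')%N => [wlog_le | h1 h1' Eh Eh'].
  move=> h1 h1' Eh Eh'; case: (leqP d d') => [|/ltnW] le.
    exact: wlog_le.
  by have [-> ->] := wlog_le _ _ _ _ le h1' h1 Eh' Eh.
have Eh'h : h' = (1 - 'X) ^+ (d' - d) * h.
  apply/polyP => i; have := congr1 (coefp i) (Eh' i.+1).
  rewrite /= !coef_take_poly ltnSn => ->.
  have := congr1 (coefp i) (take_polyMl ((1 - 'X) ^+ (d' - d)) (Eh i.+1)).
  by rewrite /= !coef_take_poly ltnSn mulrA -exprD subnK.
have dd' : d = d'.
  apply/eqP; rewrite eqn_leq le_dd' /= -subn_eq0; apply: contraNT h1' => dd'.
  by rewrite Eh'h hornerM horner_exp !hornerE subrr expr0n (negbTE dd') mul0r.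
by split=> //; rewrite Eh'h dd' subnn mul1r.
Qed.

End TruncatedSeries.

Section CompositionSeries.
Variable R : comNzRingType.
Local Open Scope ring_scope.

Definition comp_series k N : {poly R} := \poly_(i < N) (ncompositions k i)%:R.

Lemma comp_series_succ k N :
  take_poly N ((1 - 'X) * comp_series k.+1 N) = take_poly N ('X * comp_series k N).
Proof.
apply/polyP => -[|i]; rewrite !coef_take_poly; case: ifP => // ltiN;
  rewrite mulrBl mul1r coefB !coefXM !coef_poly ltiN /=.
  by rewrite big_ord0 subr0.
by rewrite (ltnW ltiN) big_ord_recl subSS subn0 natrD addrK.
Qed.

Lemma comp_series_1subX k N :
  take_poly N ((1 - 'X) ^+ k * comp_series k N) = take_poly N ('X ^+ k).
Proof.
elim: k => [|k IHk].
  apply/polyP => i; rewrite !coef_take_poly; case: ifP => // ltiN.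
  by rewrite expr0 mul1r coef_poly coefXn ltiN.
rewrite exprSr -mulrA (take_polyMl _ (comp_series_succ k N)) mulrCA exprS.
exact: take_polyMl.
Qed.

End CompositionSeries.

Local Notation family_indep Gf := (family (fun i (F : {set _}) => independent (Gf i) F)).

Section EdgeIdealHPoly.
Variable T : finType.
Implicit Types (G : graph T) (F : {set T}).

Lemma independent0 G : independent G set0.
Proof. by rewrite /independent sub0set; apply/forall_inP => x; rewrite inE. Qed.

Lemma independent_card_le G F : independent G F -> #|F| <= alpha G.
Proof. exact: (leq_bigmax_cond (F := fun F : {set T} => #|F|)). Qed.

Definition max_independent G : {set T} := [arg max_(F > set0 | independent G F) #|F|].

Lemma max_independentP G :
  independent G (max_independent G) /\ #|max_independent G| = alpha G.
Proof.
rewrite /max_independent; case: arg_maxnP => [|F indF maxF]; first exact: independent0.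
by split=> //; apply/eqP; rewrite eqn_leq independent_card_le //; apply/bigmax_leqP.
Qed.

Lemma independent_adj G F x y : independent G F -> x \in F -> y \in F -> ~~ adj G x y.
Proof. by case/andP=> _ /forall_inP/(_ x) + xF yF => /(_ xF)/forall_inP/(_ y yF). Qed.

Lemma independent_delv G A F :
  independent (delv G A) F = independent G F && [disjoint F & A].
Proof.
rewrite /independent /= subsetD andbAC; case: (boolP (F \subset verts G)) => //= /subsetP FV.
rewrite andbC; case: (boolP [disjoint F & A]) => [/disjointFr FA|]; rewrite ?andbF // andbT.
apply: eq_forallb_in => x Fx; apply: eq_forallb_in => y Fy.
by rewrite !inE !FA ?FV ?andbT.
Qed.

Lemma alpha_family (I : finType) (Gf : I -> graph T) b :
  \max_(g in family_indep Gf) (b + \sum_i #|g i|) =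
  b + \sum_i alpha (Gf i).
Proof.
apply/eqP; rewrite eqn_leq; apply/andP; split.
  apply/bigmax_leqP => g /familyP indg; rewrite leq_add2l.
  by apply: leq_sum => i _; apply: independent_card_le; apply: indg.
pose g0 : {ffun I -> {set T}} := [ffun i => max_independent (Gf i)].
have fam_g0 : g0 \in family_indep Gf.
  by apply/familyP => i; rewrite ffunE; case: (max_independentP (Gf i)).
pose size_g (g : {ffun I -> {set T}}) := b + \sum_i #|g i|.
apply: leq_trans (leq_bigmax_cond (F := size_g) _ fam_g0).
rewrite leq_add2l; apply/eq_leq/eq_bigr => i _.
by rewrite ffunE; case: (max_independentP (Gf i)).
Qed.

Local Open Scope ring_scope.

Definition hpoly G : {poly int} :=
  \sum_(F | independent G F) 'X ^+ #|F| * (1 - 'X) ^+ (alpha G - #|F|).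

Definition hilb_series G N : {poly int} := \poly_(i < N) (hilb_fun G i)%:R.

Lemma hilb_seriesE G N :
  hilb_series G N = \sum_(F | independent G F) comp_series int #|F| N.
Proof.
apply/polyP => i; rewrite coef_poly coef_sum.
under eq_bigr do rewrite coef_poly.
by case: (i < N)%N; [rewrite hilb_funE natr_sum | rewrite big1].
Qed.

Lemma take_hpoly G N :
  take_poly N (hpoly G) = take_poly N ((1 - 'X) ^+ alpha G * hilb_series G N).
Proof.
rewrite hilb_seriesE mulr_sumr !take_poly_sum; apply: eq_bigr => F /independent_card_le le_F.
rewrite -[in RHS](subnK le_F) exprD -mulrA (take_polyMl _ (comp_series_1subX _ _ _)).
by rewrite mulrC.
Qed.

Lemma take_is_hilb G d h N : is_hilb G d h ->
  take_poly N h = take_poly N ((1 - 'X) ^+ d * hilb_series G N).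
Proof.
case=> _ hE; apply/polyP => i; rewrite !coef_take_poly; case: ifP => // ltiN.
pose c k : int := (-1) ^+ k * ('C(d, k))%:R * (hilb_fun G (i - k))%:R.
rewrite hE coefM (big_ord_widen i.+1 c) ?ltnS ?geq_minl //.
rewrite big_mkcond; apply: eq_bigr => j _ /=.
rewrite coef_1subX_exp coef_poly (leq_ltn_trans (leq_subr _ _) ltiN).
case: ifP => //; rewrite ltnS leq_min -ltnS ltn_ord /= => /negbT.
by rewrite -ltnNge => /bin_small->; rewrite mulr0 mul0r.
Qed.

Lemma hpoly1_gt0 G : 0 < (hpoly G).[1].
Proof.
have [indM cardM] := max_independentP G.
rewrite /hpoly horner_sum (bigD1 _ indM) /= ltr_pwDl //.
  by rewrite hornerM !horner_exp !hornerE cardM subnn expr0 expr1n mulr1.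
apply: sumr_ge0 => F _; rewrite hornerM !horner_exp !hornerE expr1n mul1r subrr.
exact: exprn_ge0.
Qed.

Lemma hpoly_neq0 G : hpoly G != 0.
Proof. by apply: contraTneq (hpoly1_gt0 G) => ->; rewrite horner0 ltxx. Qed.

Lemma prod_hpoly_neq0 (I : finType) (Gf : I -> graph T) : \prod_i hpoly (Gf i) != 0.
Proof. by rewrite prodf_seq_neq0; apply/allP => i _; apply: hpoly_neq0. Qed.

Lemma is_hilbE G d h : is_hilb G d h -> d = alpha G /\ h = hpoly G.
Proof.
move=> hilb_h; apply: (take_poly_1subX_exp_inj (S := hilb_series G)).
- exact: hilb_h.1.
- by rewrite gt_eqF ?hpoly1_gt0.
- by move=> N; apply: take_is_hilb.
- by move=> N; apply: take_hpoly.
Qed.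

Lemma prod_hpoly (I : finType) (Gf : I -> graph T) :
  \prod_i hpoly (Gf i) =
  \sum_(g in family_indep Gf)
     'X ^+ (\sum_i #|g i|) * (1 - 'X) ^+ (\sum_i alpha (Gf i) - \sum_i #|g i|).
Proof.
rewrite /hpoly bigA_distr_big_dep; apply: eq_bigr => g /familyP indg.
rewrite big_split /= !prodrXr sumnB // => i _.
exact: independent_card_le (indg i).
Qed.

End EdgeIdealHPoly.

Section PolyDegree.
Local Open Scope ring_scope.
Implicit Types p q : {poly int}.

Lemma pdegM p q : p != 0 -> q != 0 -> pdeg (p * q) = (pdeg p + pdeg q)%N.
Proof.
rewrite /pdeg -!size_poly_gt0 => p0 q0; rewrite size_mul -?size_poly_gt0 //.
by case: (size p) p0 => // a _; case: (size q) q0 => // b _; rewrite addSn addnS.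
Qed.

Lemma pdeg_prod (I : finType) (F : I -> {poly int}) :
  (forall i, F i != 0) -> pdeg (\prod_i F i) = (\sum_i pdeg (F i))%N.
Proof.
move=> F0; suff [] : \prod_i F i != 0 /\ pdeg (\prod_i F i) = (\sum_i pdeg (F i))%N by [].
elim/big_rec2: _ => [|i s p _ [p0 <-]]; first by rewrite oner_neq0 /pdeg size_poly1.
by rewrite mulf_neq0 // pdegM.
Qed.

Lemma pdegXn k : pdeg 'X^k = k.
Proof. by rewrite /pdeg size_polyXn. Qed.

Lemma poly_1subX_neq0 : 1 - 'X != 0 :> {poly int}.
Proof. by rewrite -size_poly_eq0 -opprB size_polyN size_XsubC. Qed.

Lemma pdeg_1subX_exp k : pdeg ((1 - 'X : {poly int}) ^+ k) = k.
Proof. by rewrite /pdeg size_exp -opprB size_polyN size_XsubC mul1n. Qed.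

Lemma lead_coef_1subX_exp k : lead_coef ((1 - 'X : {poly int}) ^+ k) = (-1) ^+ k.
Proof. by rewrite lead_coef_exp -opprB lead_coefN lead_coefXsubC. Qed.

End PolyDegree.

Lemma size_sum_sign (R : numDomainType) (I : finType) (P : pred I) (p : I -> {poly R}) m c :
  (forall k, P k -> size (p k) <= m.+1) ->
  (forall k, P k -> (0 <= c * (p k)`_m)%R) ->
  (exists2 k, P k & (0 < c * (p k)`_m)%R) ->
  size (\sum_(k | P k) p k)%R = m.+1.
Proof.
move=> size_p sign_p [k0 Pk0 pos_k0]; apply/anti_leq/andP; split.
  by apply: leq_trans (size_sum _ _ _) _; apply/bigmax_leqP.
have coef_pos : (0 < c * (\sum_(k | P k) p k)`_m)%R.
  rewrite coef_sum mulr_sumr (bigD1 k0) //= ltr_wpDr // sumr_ge0 // => k /andP[Pk _].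
  exact: sign_p.
rewrite ltnNge; apply: contraTN coef_pos => /leq_sizeP/(_ m (leqnn m))->.
by rewrite mulr0 ltxx.
Qed.

Section HnGraph.
Variables (T : finType) (n : nat) (G : 'I_n -> graph T) (A : 'I_n -> {set T}).
Hypothesis disjG : forall i j, i != j -> [disjoint verts (G i) & verts (G j)].
Hypothesis AG : forall i, A i \subset verts (G i).
Local Notation H := (Hn G A).
Implicit Types (o : option 'I_n) (g : {ffun 'I_n -> {set T}}).

Definition Gdel (o : option 'I_n) i := if o == Some i then delv (G i) (A i) else G i.

(* An independent set of H_n is encoded by the new vertex y_j it contains, if
   any, and by its traces on the G_i. *)
Definition Hn_set (o : option 'I_n) (g : {ffun 'I_n -> {set T}}) : {set T + 'I_n} :=
  inr @: [set j | o == Some j] :|: inl @: \bigcup_i g i.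

Definition Hn_pick (F : {set T + 'I_n}) := [pick j | inr j \in F].

Definition Hn_trace (F : {set T + 'I_n}) : {ffun 'I_n -> {set T}} :=
  [ffun i => [set x in verts (G i) | inl x \in F]].

Lemma verts_inj i j x : x \in verts (G i) -> x \in verts (G j) -> i = j.
Proof.
move=> xGi xGj; apply/eqP; apply: contraLR xGj => /disjG.
by rewrite disjoint_sym => /disjointFl->.
Qed.

Lemma in_Hn_set_inl o g x : (inl x \in Hn_set o g) = (x \in \bigcup_i g i).
Proof. by rewrite in_setU (mem_imset _ _ (@inl_inj _ _)); case: imsetP => [[]|]. Qed.

Lemma in_Hn_set_inr o g j : (inr j \in Hn_set o g) = (o == Some j).
Proof.
rewrite in_setU (mem_imset _ _ (@inr_inj _ _)) inE.
by case: imsetP => [[]|] //; rewrite orbF.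
Qed.

Lemma independent_Gdel o i F :
  independent (Gdel o i) F = independent (G i) F && ((o == Some i) ==> [disjoint F & A i]).
Proof. by rewrite /Gdel; case: eqP => _; rewrite ?independent_delv ?andbT. Qed.

Lemma family_Gdel_sub o g :
  g \in family_indep (Gdel o) -> forall i, g i \subset verts (G i).
Proof.
move=> /familyP indg i; have : independent (Gdel o i) (g i) := indg i.
by rewrite independent_Gdel => /andP[/andP[]].
Qed.

Lemma card_Hn_set o g : (forall i, g i \subset verts (G i)) ->
  #|Hn_set o g| = (o != None) + \sum_i #|g i|.
Proof.
move=> sub; rewrite -sum1_card big_sumType addnC; congr (_ + _).
  rewrite (eq_bigl _ _ (in_Hn_set_inl o g)) partition_disjoint_bigcup => [|i j ij].
    by apply: eq_bigr => i _; rewrite sum1_card.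
  exact: disjointWl (sub i) (disjointWr (sub j) (disjG ij)).
rewrite (eq_bigl _ _ (in_Hn_set_inr o g)).
by case: o => [j|]; rewrite ?(big_pred1 j) ?big_pred0.
Qed.

Lemma Hn_setK o g : g \in family_indep (Gdel o) ->
  Hn_pick (Hn_set o g) = o /\ Hn_trace (Hn_set o g) = g.
Proof.
move=> famg; have sub := family_Gdel_sub famg; split.
  rewrite /Hn_pick; case: pickP => [j | noY]; first by rewrite in_Hn_set_inr => /eqP.
  by case: o {famg sub} noY => // j /(_ j); rewrite in_Hn_set_inr eqxx.
apply/ffunP => i; apply/setP => x; rewrite ffunE inE in_Hn_set_inl.
apply/andP/idP => [[xGi /bigcupP[j _ xgj]] | xgi].
  by rewrite (verts_inj xGi (subsetP (sub j) _ xgj)).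
by split; [apply: subsetP (sub i) _ xgi | apply/bigcupP; exists i].
Qed.

Lemma Hn_set_independent o g :
  g \in family_indep (Gdel o) -> independent H (Hn_set o g).
Proof.
move=> famg; have sub := family_Gdel_sub famg.
have indg i : independent (Gdel o i) (g i) := (familyP famg) i.
have inlP x : reflect (exists2 i, x \in g i & x \in verts (G i)) (inl x \in Hn_set o g).
  rewrite in_Hn_set_inl; apply: (iffP bigcupP) => -[i].
    by move=> _ xgi; exists i => //; apply: subsetP (sub i) _ xgi.
  by move=> xgi _; exists i.
have notA x j : inl x \in Hn_set o g -> o = Some j -> x \notin A j.
  move=> /inlP[i xgi xGi] oj; have := indg i; rewrite independent_Gdel oj.
  case: (eqVneq j i) xgi => [<- xgj | ji _ _].
    by rewrite eqxx => /andP[_ /disjointFr/(_ xgj)->].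
  by apply/negP => /(subsetP (AG j)) xGj; rewrite (disjointFr (disjG ji) xGj) in xGi.
apply/andP; split.
  by apply/subsetP => -[x /inlP[i _ xGi] | j _]; rewrite inE //; apply/existsP; exists i.
apply/forall_inP => -[x|j] u_in; apply/forall_inP => -[y|j'] v_in /=.
- case/inlP: u_in => i xgi xGi; case/inlP: v_in => i' ygi yGi.
  apply/existsP => -[k /and3P[xy xGk yGk]].
  move: xgi ygi; rewrite (verts_inj xGi xGk) (verts_inj yGi yGk) => xgk ygk.
  have := indg k; rewrite independent_Gdel => /andP[indk _].
  by rewrite (negbTE (independent_adj indk xgk ygk)) in xy.
- by apply: notA u_in _; move: v_in; rewrite in_Hn_set_inr => /eqP.
- by apply: notA v_in _; move: u_in; rewrite in_Hn_set_inr => /eqP.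
- by move: u_in v_in; rewrite !in_Hn_set_inr => /eqP-> /eqP[->]; rewrite eqxx.
Qed.

Lemma Hn_traceK (S : {set T + 'I_n}) :
  independent H S -> Hn_set (Hn_pick S) (Hn_trace S) = S.
Proof.
move=> indS; apply/setP => -[x|j].
  rewrite in_Hn_set_inl; apply/bigcupP/idP => [[i _] | xS].
    by rewrite ffunE inE => /andP[].
  have : inl x \in verts H by apply: subsetP xS; case/andP: indS.
  rewrite inE => /existsP[i xGi].
  by exists i => //; rewrite ffunE inE xGi.
rewrite in_Hn_set_inr /Hn_pick; case: pickP => [j' j'S | noY]; last by rewrite noY.
apply/eqP/idP => [[<-] // | jS]; congr Some; apply/eqP.
by have := independent_adj indS j'S jS; rewrite /= negbK.
Qed.

Lemma Hn_trace_family (S : {set T + 'I_n}) :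
  independent H S -> Hn_trace S \in family_indep (Gdel (Hn_pick S)).
Proof.
move=> indS; apply/familyP => i; rewrite unfold_in independent_Gdel; apply/andP; split.
  apply/andP; split; first by apply/subsetP => x; rewrite ffunE inE => /andP[].
  apply/forall_inP => x; rewrite ffunE inE => /andP[xGi xS].
  apply/forall_inP => y; rewrite inE => /andP[yGi yS].
  apply: contra (independent_adj indS xS yS) => xy.
  by apply/existsP; exists i; rewrite xy xGi yGi.
apply/implyP; rewrite /Hn_pick; case: pickP => // j jS /eqP[<-].
rewrite disjoints_subset; apply/subsetP => x; rewrite ffunE !inE => /andP[_ xS].
exact: independent_adj indS xS jS.
Qed.

Lemma big_independent_Hn (R : Type) (idx : R) (op : Monoid.com_law idx) (w : nat -> R) :
  \big[op/idx]_(S | independent H S) w #|S| =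
  \big[op/idx]_o \big[op/idx]_(g in family_indep (Gdel o)) w ((o != None) + \sum_i #|g i|).
Proof.
rewrite (reindex_onto (fun p => Hn_set p.1 p.2) (fun S => (Hn_pick S, Hn_trace S))) /=;
  last exact: Hn_traceK.
rewrite pair_big_dep; apply/esym/eq_big => -[o g] /=.
  apply/idP/andP => [famg | [indS /eqP[pickS traceS]]].
    by have [-> ->] := Hn_setK famg; rewrite Hn_set_independent.
  by move: (Hn_trace_family indS); rewrite pickS traceS.
by move=> famg; rewrite card_Hn_set //; apply: family_Gdel_sub famg.
Qed.

Lemma alpha_Hn : alpha H = \max_o ((o != None) + \sum_i alpha (Gdel o i)).
Proof.
rewrite {1}/alpha (big_independent_Hn _ (fun k => k)).
by apply: eq_bigr => o _; apply: alpha_family.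
Qed.

Definition Hn_term o : {poly int} :=
  ('X ^+ (o != None) * (1 - 'X) ^+ (alpha H - ((o != None) + \sum_i alpha (Gdel o i)))
   * \prod_i hpoly (Gdel o i))%R.

Lemma hpoly_Hn : hpoly H = (\sum_o Hn_term o)%R.
Proof.
rewrite {1}/hpoly (big_independent_Hn _ (fun k => 'X ^+ k * (1 - 'X) ^+ (alpha H - k)%N)%R).
apply: eq_bigr => o _; rewrite /Hn_term prod_hpoly mulr_sumr; apply: eq_bigr => g /familyP indg.
set b := nat_of_bool _; set D := \sum_i alpha _; set K := \sum_i #|g i|.
have le_KD : K <= D by apply: leq_sum => i _; apply: independent_card_le; apply: indg.
have le_bDa : b + D <= alpha H.
  rewrite alpha_Hn.
  exact: (leq_bigmax (F := fun o => (o != None) + \sum_i alpha (Gdel o i))).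
move: le_KD le_bDa; clearbody b D K; move: (alpha H) => a le_KD le_bDa.
have -> : (a - (b + K) = a - (b + D) + (D - K))%N by lia.
by rewrite !exprD -!mulrA; congr (_ * _)%R; rewrite mulrCA.
Qed.

Lemma sum_Gdel_Some (f : graph T -> nat) j :
  \sum_i f (Gdel (Some j) i) + f (G j) = \sum_i f (G i) + f (delv (G j) (A j)).
Proof.
rewrite (bigD1 j) // [in RHS](bigD1 j) //= {1}/Gdel eqxx.
rewrite (eq_bigr (fun i => f (G i))) => [|i ji]; first lia.
by rewrite /Gdel (inj_eq (@Some_inj _)) eq_sym (negbTE ji).
Qed.

Hypothesis alpha_delv_lt : forall j, alpha (delv (G j) (A j)) < alpha (G j).

Lemma alpha_Hn_sum : alpha H = \sum_i alpha (G i).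
Proof.
rewrite alpha_Hn; apply/eqP; rewrite eqn_leq; apply/andP; split.
  apply/bigmax_leqP => -[j|] _ //.
  by have := sum_Gdel_Some (@alpha T) j; have := alpha_delv_lt j; rewrite /=; lia.
by rewrite (bigD1 None) //= leq_maxl.
Qed.

Lemma Hn_term_exp o : alpha H - ((o != None) + \sum_i alpha (Gdel o i)) =
  if o is Some j then (alpha (G j) - alpha (delv (G j) (A j))).-1 else 0.
Proof.
rewrite alpha_Hn_sum; case: o => [j|] /=; last exact: subnn.
have := sum_Gdel_Some (@alpha T) j; have := alpha_delv_lt j.
by move: (\sum_i alpha (G i)) (\sum_i alpha (Gdel (Some j) i)) => D Dj; lia.
Qed.

Hypothesis alpha_delv_odd : forall j, odd (alpha (G j) - alpha (delv (G j) (A j))).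
Hypothesis pdeg_hpoly_delv : forall j,
  (pdeg (hpoly (G j)) + alpha (delv (G j) (A j))).+1 =
  pdeg (hpoly (delv (G j) (A j))) + alpha (G j).

Lemma Hn_term_neq0 o : Hn_term o != 0%R.
Proof. by rewrite !mulf_neq0 ?expf_neq0 ?polyX_eq0 ?poly_1subX_neq0 ?prod_hpoly_neq0. Qed.

Lemma pdeg_Hn_term o : pdeg (Hn_term o) = (o != None) + \sum_i pdeg (hpoly (G i)).
Proof.
rewrite /Hn_term !pdegM ?mulf_neq0 ?expf_neq0 ?polyX_eq0 ?poly_1subX_neq0 ?prod_hpoly_neq0 //.
rewrite pdeg_prod => [|i]; last exact: hpoly_neq0.
rewrite pdegXn pdeg_1subX_exp Hn_term_exp; case: o => [j|] //=.
have := sum_Gdel_Some (fun G => pdeg (hpoly G)) j; have := pdeg_hpoly_delv j.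
have := alpha_delv_lt j; rewrite -subn1.
move: (\sum_i pdeg (hpoly (G i))) (\sum_i pdeg (hpoly (Gdel (Some j) i))) => S Sj.
lia.
Qed.

Lemma lead_coef_Hn_term o :
  lead_coef (Hn_term o) = (\prod_i lead_coef (hpoly (Gdel o i)))%R.
Proof.
rewrite /Hn_term !lead_coefM lead_coefXn lead_coef_1subX_exp lead_coef_prod Hn_term_exp mul1r.
case: o => [j|]; last by rewrite expr0 mul1r.
have := alpha_delv_odd j; have := alpha_delv_lt j; rewrite -subn_gt0.
by case: (_ - _)%N => // t _ /= /negbTE odd_t; rewrite -signr_odd odd_t expr0 mul1r.
Qed.

Hypothesis lead_coef_sign : exists eps : int, forall i,
  (0 < eps * lead_coef (hpoly (G i)))%R /\
  (0 < eps * lead_coef (hpoly (delv (G i) (A i))))%R.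
Hypothesis n_gt0 : 0 < n.

Lemma pdeg_hpoly_Hn : pdeg (hpoly H) = 1 + \sum_i pdeg (hpoly (G i)).
Proof.
have [eps lead_pos] := lead_coef_sign; set S := \sum_i _.
have size_term o : size (Hn_term o) = ((o != None) + S).+1.
  by rewrite -pdeg_Hn_term /pdeg prednK // size_poly_gt0 Hn_term_neq0.
have coef_term j : (0 < (\prod_(i < n) eps) * (Hn_term (Some j))`_S.+1)%R.
  have -> : S.+1 = (size (Hn_term (Some j))).-1 by rewrite size_term.
  rewrite -lead_coefE lead_coef_Hn_term -big_split /=; apply: prodr_gt0 => i _.
  by rewrite /Gdel; case: ifP => _; case: (lead_pos i).
rewrite hpoly_Hn /pdeg (size_sum_sign (m := S.+1) (c := \prod_(i < n) eps)) //.
- by move=> o _; rewrite size_term; case: o.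
- by move=> -[j|] _; [apply: ltW | rewrite nth_default ?mulr0 ?size_term].
- by exists (Some (Ordinal n_gt0)).
Qed.

End HnGraph.

Theorem lemma3p2 (T : finType) (n : nat) (G : 'I_n -> graph T) (A : 'I_n -> {set T})
  (dG dGA : 'I_n -> nat) (hG hGA : 'I_n -> {poly int}) :
  0 < n ->
  (forall i, simple_graph (G i)) ->
  (forall i j, i != j -> [disjoint verts (G i) & verts (G j)]) ->
  (forall i, A i \subset verts (G i)) ->
  (forall i, is_hilb (G i) (dG i) (hG i)) ->
  (forall i, is_hilb (delv (G i) (A i)) (dGA i) (hGA i)) ->
  (* (a) t_i = alpha(G_i) - alpha(G_i \ A_i) is odd and >= 1 *)
  (forall i, (alpha (delv (G i) (A i)) <= alpha (G i)) /\
             odd (alpha (G i) - alpha (delv (G i) (A i))) /\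
             1 <= alpha (G i) - alpha (delv (G i) (A i))) ->
  (* (b) deg(G_i) - deg(G_i \ A_i) = t_i - 1 *)
  (forall i, ((pdeg (hG i))%:Z - (pdeg (hGA i))%:Z =
              (alpha (G i))%:Z - (alpha (delv (G i) (A i)))%:Z - 1)%R) ->
  (* (c) leading coefficients all positive or all negative *)
  ((forall i, (0 < lead_coef (hG i))%R /\ (0 < lead_coef (hGA i))%R) \/
   (forall i, (lead_coef (hG i) < 0)%R /\ (lead_coef (hGA i) < 0)%R)) ->
  forall (d : nat) (h : {poly int}), is_hilb (Hn G A) d h ->
    d = \sum_(i < n) alpha (G i) /\ pdeg h = 1 + \sum_(i < n) pdeg (hG i).
Proof.
move=> n_gt0 _ disjG AG hilbG hilbGA ht hdeg hsign d h hilbH.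
have hGE i : hG i = hpoly (G i) := (is_hilbE (hilbG i)).2.
have hGAE i : hGA i = hpoly (delv (G i) (A i)) := (is_hilbE (hilbGA i)).2.
have alpha_lt j : alpha (delv (G j) (A j)) < alpha (G j).
  by rewrite -subn_gt0; case: (ht j) => _ [].
have [-> ->] := is_hilbE hilbH; split; first exact: alpha_Hn_sum.
under eq_bigr do rewrite hGE.
apply: pdeg_hpoly_Hn => // [j | j | ].
- by case: (ht j) => _ [].
- by have := hdeg j; rewrite hGE hGAE; lia.
- case: hsign => [pos | neg]; [exists 1%R | exists (-1)%R] => i; rewrite -hGE -hGAE.
    by rewrite !mul1r; apply: pos.
  by rewrite !mulN1r !oppr_gt0; apply: neg.
Qed.
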